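(* Let $n \ge 1$ and $1 \le k \le n$ be integers, and let $D_n^{2\times k}$ be the graph obtained from two disjoint copies $K_{n,1}$ and $K_{n,2}$ of the complete graph $K_n$ by adding $k$ distinct edges $e_1,\dots,e_k$, each of the form $e_i=(v_{i,1},v_{i,2})$ with $v_{i,1}$ a vertex of $K_{n,1}$ and $v_{i,2}$ a vertex of $K_{n,2}$. Then $D_n^{2\times k}$ has $2n$ vertices and $$\frac{2}{3(2n-1)} \le \lambda_2(D_n^{2\times k}) \le \frac{2k}{n}.$$
   Context: All graphs are finite, simple and unweighted. For a graph $G$ with adjacency matrix $A$ and diagonal degree matrix $D$, the graph Laplacian is $L_G = D - A$, with eigenvalues ordered $0=\lambda_1 \le \lambda_2 \le \dots$; $\lambda_2(G)$ denotes the second smallest eigenvalue of $L_G$. *)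

From HB Require Import structures.
From mathcomp Require Import all_boot all_order all_algebra.
From mathcomp Require Import reals.
Set Implicit Arguments. Unset Strict Implicit. Unset Printing Implicit Defensive.
Import Order.TTheory GRing.Theory Num.Theory.
Local Open Scope ring_scope.

(* Vertices of D_n^{2 x k}: 'I_(n + n); the first copy K_{n,1} is the image
   of lshift, the second copy K_{n,2} the image of rshift.
   The k added edges are given by an injective map
   f : 'I_k -> 'I_n * 'I_n, edge e_i joining (lshift (f i).1) and
   (rshift (f i).2). *)
Definition Dadj (n k : nat) (f : 'I_k -> 'I_n * 'I_n) : rel 'I_(n + n) :=
  fun u v =>
    match fintype.split u, fintype.split v with
    | inl a, inl b => a != b
    | inr a, inr b => a != b
    | inl a, inr b => (a, b) \in codom f
    | inr a, inl b => (b, a) \in codom f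
    end.

Definition adjmx (R : nzRingType) (m : nat) (e : rel 'I_m) : 'M[R]_m :=
  \matrix_(i, j) (e i j)%:R.

Definition degmx (R : nzRingType) (m : nat) (e : rel 'I_m) : 'M[R]_m :=
  \matrix_(i, j) ((i == j)%:R * (#|[pred x | e i x]|)%:R).

Definition laplacian (R : nzRingType) (m : nat) (e : rel 'I_m) : 'M[R]_m :=
  degmx R e - adjmx R e.

(* s is the list of all eigenvalues (with algebraic multiplicity) of A,
   in nondecreasing order: lambda_1 = s`_0 <= lambda_2 = s`_1 <= ... *)
Definition sorted_eigenvalues (R : realType) (m : nat) (A : 'M[R]_m)
  (s : seq R) : Prop :=
  sorted <=%R s /\ char_poly A = \prod_(x <- s) ('X - x%:P).

(* Both bounds come from the Courant-Fischer characterisation of lambda_2,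
   proved here for a real symmetric matrix L through the complex spectral
   theorem: a nonzero combination of the eigenvectors of lambda_1 and
   lambda_2 can be made orthogonal to the all-ones vector, and every
   complexified real plane contains a nonzero vector orthogonal to the
   eigenvector of lambda_1.  The Hermitian form of L at a complex vector is
   the sum of its real forms at the real and imaginary parts, so both facts
   transfer to real vectors.
   The Laplacian form of D_n^{2 x k} is the sum of the forms of K_n on the
   two halves, n * sum y^2 - (sum y)^2, and of the squared differences
   across the k bridges.  For z orthogonal to 1 the two halves have sums m
   and -m; keeping a single bridge (a, b) and bounding (n y_a - m)^2 and
   (n w_b + m)^2 by n - 1 times the K_n-forms gives the lower bound.  For
   the upper bound take the plane spanned by 1 and the vector equal to 1 on
   the first half and -1 on the second: on a + b * sign the form is 4 k b^2
   while the squared norm is 2 n (a^2 + b^2). *)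

From HB Require Import structures.
From mathcomp Require Import all_boot all_order all_algebra.
From mathcomp Require Import reals complex sesquilinear spectral.
From mathcomp.algebra_tactics Require Import ring lra.
Set Implicit Arguments. Unset Strict Implicit. Unset Printing Implicit Defensive.
Import Order.TTheory GRing.Theory Num.Theory.
Local Open Scope ring_scope.

Section Dispersion.
Variable R : realFieldType.

Lemma sum_sqr_diff (T : finType) (P : pred T) (t : T -> R) :
  \sum_(i | P i) \sum_(j | P j) (t i - t j) ^+ 2 =
  (#|P|%:R * \sum_(i | P i) t i ^+ 2 - (\sum_(i | P i) t i) ^+ 2) *+ 2.
Proof.
have sum_const x : \sum_(j | P j) x = #|P|%:R * x by rewrite sumr_const mulr_natl.
have expand i j : (t i - t j) ^+ 2 = t i ^+ 2 + (t j ^+ 2 - 2 * (t i * t j)).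
  by ring.
under eq_bigr => i _ do under eq_bigr => j _ do rewrite expand.
under eq_bigr => i _ do rewrite big_split /= sum_const sumrB -!mulr_sumr.
rewrite big_split /= sumrB -mulr_sumr sum_const -mulr_sumr -mulr_suml expr2.
ring.
Qed.

Lemma sqr_sum_le (T : finType) (P : pred T) (t : T -> R) :
  (\sum_(i | P i) t i) ^+ 2 <= #|P|%:R * \sum_(i | P i) t i ^+ 2.
Proof.
have : 0 <= \sum_(i | P i) \sum_(j | P j) (t i - t j) ^+ 2.
  by do 2![apply: sumr_ge0 => ? _]; exact: sqr_ge0.
by rewrite sum_sqr_diff pmulrn_lge0 // subr_ge0.
Qed.

(* The quadratic form of the Laplacian of the complete graph on [T] at [t]. *)
Definition dispersion {T : finType} (t : T -> R) :=
  #|T|%:R * \sum_i t i ^+ 2 - (\sum_i t i) ^+ 2.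

Lemma dispersion_ge0 (T : finType) (t : T -> R) : 0 <= dispersion t.
Proof. by rewrite subr_ge0; exact: (sqr_sum_le predT). Qed.

Lemma dispersion_const (T : finType) (t : T -> R) (x : R) :
  (forall i, t i = x) -> dispersion t = 0.
Proof.
move=> tE; rewrite /dispersion; under eq_bigr do rewrite tE.
under [X in _ - X ^+ 2]eq_bigr do rewrite tE.
by rewrite !sumr_const -mulr_natl; ring.
Qed.

Lemma sqr_deviation_le (T : finType) (t : T -> R) (a : T) :
  (#|T|%:R * t a - \sum_i t i) ^+ 2 <= (#|T|%:R - 1) * dispersion t.
Proof.
have cs := sqr_sum_le (predC1 a) t.
have card_pos : (0 < #|T|)%N by apply/card_gt0P; exists a.
rewrite cardC1 in cs.
rewrite /dispersion -(prednK card_pos) mulrSr (bigD1 a) //= [\sum_i t i ^+ 2](bigD1 a) //=.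
rewrite addrK -subr_ge0.
set N := (#|T|.-1)%:R in cs *; set S := \sum_(i | i != a) t i in cs *.
set S2 := \sum_(i | i != a) t i ^+ 2 in cs *.
have N_ge0 : 0 <= N by rewrite ler0n.
have -> : N * ((N + 1) * (t a ^+ 2 + S2) - (t a + S) ^+ 2) - ((N + 1) * t a - (t a + S)) ^+ 2
          = (N + 1) * (N * S2 - S ^+ 2) by ring.
by apply: mulr_ge0; lra.
Qed.

End Dispersion.

(* [Y2] and [Z2] are the squared norms of the two halves of a vector
   orthogonal to 1, with sums [m] and [-m]; [ya] and [zb] are the values at
   the ends of one bridge. *)
Lemma two_clique_ineq (R : realFieldType) (n Y2 Z2 m ya zb : R) : 1 <= n ->
  0 <= n * Y2 - m ^+ 2 -> 0 <= n * Z2 - m ^+ 2 ->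
  (n * ya - m) ^+ 2 <= (n - 1) * (n * Y2 - m ^+ 2) ->
  (n * zb + m) ^+ 2 <= (n - 1) * (n * Z2 - m ^+ 2) ->
  2 / (3 * (2 * n - 1)) * (Y2 + Z2) <=
  (n * Y2 - m ^+ 2) + (n * Z2 - m ^+ 2) + (ya - zb) ^+ 2.
Proof.
move=> n_ge1 Y_ge0 Z_ge0 dev_a dev_b.
set Y := n * Y2 - m ^+ 2 in Y_ge0 dev_a *; set Z := n * Z2 - m ^+ 2 in Z_ge0 dev_b *.
set d := n * ya - m in dev_a; set e := n * zb + m in dev_b.
set K := 2 / (3 * (2 * n - 1)).
have n_gt0 : 0 < n by lra.
have de_le : (d - e) ^+ 2 <= 2 * (n - 1) * (Y + Z) by have := sqr_ge0 (d + e); lra.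
have bridge_ge : 4 / 3 * m ^+ 2 - (d - e) ^+ 2 / 2 <= (d - e + 2 * m) ^+ 2.
  by have := sqr_ge0 (d - e + 4 / 3 * m); lra.
have Kn_le : K * n <= 2 / 3 by rewrite /K mulrAC ler_pdivrMr; lra.
have KnE : K * n * (Y + Z + 2 * m ^+ 2) <= 2 / 3 * (Y + Z + 2 * m ^+ 2).
  by apply: ler_wpM2r => //; have := sqr_ge0 m; lra.
have YZ_le : Y + Z <= (n ^+ 2 - n + 1) * (Y + Z).
  rewrite -[leLHS]mul1r; apply: ler_wpM2r; first lra.
  have : 0 <= n * (n - 1) by apply: mulr_ge0; lra.
  by rewrite expr2; lra.
rewrite -(ler_pM2l (exprn_gt0 2 n_gt0)).
have -> : n ^+ 2 * (K * (Y2 + Z2)) = K * n * (Y + Z + 2 * m ^+ 2) by rewrite /Y /Z; ring.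
have -> : n ^+ 2 * (Y + Z + (ya - zb) ^+ 2) = n ^+ 2 * (Y + Z) + (d - e + 2 * m) ^+ 2.
  by rewrite /d /e; ring.
have : (n ^+ 2 - n + 1) * (Y + Z) = n ^+ 2 * (Y + Z) - (n - 1) * (Y + Z) by ring.
lra.
Qed.

Lemma sum_codom_inj (R : nmodType) (I T : finType) (f : I -> T) (G : T -> R) :
  injective f -> \sum_(x in codom f) G x = \sum_i G (f i).
Proof.
move=> f_inj; rewrite -big_uniq; last by rewrite codomE map_inj_uniq ?enum_uniq.
by rewrite codomE big_map big_enum.
Qed.

Lemma mulmx_bilinearE (R : pzRingType) (m : nat) (x : 'rV[R]_m) (A : 'M[R]_m) (Z : 'cV[R]_m) :
  (x *m A *m Z) 0 0 = \sum_u \sum_v x 0 u * A u v * Z v 0.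
Proof.
rewrite mxE; under eq_bigr do rewrite mxE mulr_suml.
by rewrite exchange_big.
Qed.

Section LaplacianForm.
Variables (R : comNzRingType) (m : nat) (e : rel 'I_m).
Hypothesis e_sym : symmetric e.

Lemma laplacian_sym : (laplacian R e)^T = laplacian R e.
Proof.
apply/matrixP => u v; rewrite !mxE e_sym eq_sym.
by case: eqP => [->|]; rewrite ?mul0r.
Qed.

Lemma laplacian_qf (z : 'rV[R]_m) :
  (z *m laplacian R e *m z^T) 0 0 *+ 2 =
  \sum_u \sum_v (e u v)%:R * (z 0 u - z 0 v) ^+ 2.
Proof.
have degE u : #|[pred x | e u x]|%:R = \sum_v (e u v)%:R :> R.
  by rewrite -sumr_const big_mkcond /=; apply: eq_bigr => v _; rewrite inE; case: (e u v).
have qfE : (z *m laplacian R e *m z^T) 0 0 =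
           \sum_u \sum_v (e u v)%:R * (z 0 u ^+ 2 - z 0 u * z 0 v).
  rewrite mulmx_bilinearE; apply: eq_bigr => u _.
  have -> : \sum_v z 0 u * laplacian R e u v * z^T v 0 =
      \sum_v (v == u)%:R * (z 0 u * #|[pred x | e u x]|%:R * z 0 v) -
      \sum_v (e u v)%:R * (z 0 u * z 0 v).
    by rewrite -sumrB; apply: eq_bigr => v _; rewrite !mxE eq_sym; ring.
  rewrite (bigD1 u) //= big1 => [|v /negbTE->]; last by rewrite mul0r.
  rewrite eqxx mul1r addr0 degE mulr_sumr mulr_suml -sumrB.
  by apply: eq_bigr => v _; ring.
have qf_swap : \sum_u \sum_v (e u v)%:R * (z 0 u ^+ 2 - z 0 u * z 0 v) =
               \sum_u \sum_v (e u v)%:R * (z 0 v ^+ 2 - z 0 u * z 0 v) :> R.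
  rewrite exchange_big; apply: eq_bigr => u _; apply: eq_bigr => v _.
  by rewrite e_sym [z 0 v * _]mulrC.
rewrite mulr2n {1}qfE qf_swap qfE -big_split /=; apply: eq_bigr => u _.
by rewrite -big_split; apply: eq_bigr => v _ /=; ring.
Qed.

End LaplacianForm.

Lemma exists_nontrivial_comb (R : comNzRingType) (x y : R) :
  exists a b : R, ((a != 0) || (b != 0)) /\ a * x + b * y = 0.
Proof.
have [->|x_neq0] := eqVneq x 0; first by exists 1, 0; rewrite oner_eq0 mulr0 mul0r addr0.
by exists y, (- x); rewrite oppr_eq0 x_neq0 orbT; split; last ring.
Qed.

Lemma char_poly_similar (R : comNzRingType) (m : nat) (Q D P : 'M[R]_m) :
  Q *m P = 1%:M -> char_poly (Q *m D *m P) = char_poly D.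
Proof.
move=> QP; rewrite /char_poly /char_poly_mx.
have -> : 'X%:M - map_mx polyC (Q *m D *m P) =
          map_mx polyC Q *m ('X%:M - map_mx polyC D) *m map_mx polyC P.
  rewrite !map_mxM mulmxBr mulmxBl mul_mx_scalar -scalemxAl.
  by rewrite -[map_mx _ Q *m map_mx _ P]map_mxM QP map_mx1 scalemx1.
by rewrite !det_mulmx mulrAC -det_mulmx -map_mxM QP map_mx1 det1 mul1r.
Qed.

(* complex_scope provides [x%:C]; ring_scope is reopened on top of it so
   that [x^*] is [Num.conj], as in spectral.v. *)
Local Open Scope complex_scope.
Local Open Scope ring_scope.
Local Open Scope sesquilinear_scope.

Section RealSymmetric.
Variables (R : rcfType) (m : nat) (L : 'M[R]_m).
Hypothesis L_sym : L^T = L.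

Local Notation LC := (map_mx (real_complex R) L).
Local Notation re y := (map_mx (@complex.Re R) y).
Local Notation im y := (map_mx (@complex.Im R) y).

Let L_symE u v : L v u = L u v.
Proof. by rewrite -[in LHS]L_sym mxE. Qed.

Lemma realC_qf (y : 'rV[R[i]]_m) :
  (y *m LC *m y^t*) 0 0 =
  ((re y *m L *m (re y)^T) 0 0 + (im y *m L *m (im y)^T) 0 0)%:C.
Proof.
set p := re y; set q := im y.
have termE u v : y 0 u * LC u v * (y^t*) v 0 =
    (L u v * (p 0 u * p 0 v + q 0 u * q 0 v))%:C +
    'i * (L u v * (q 0 u * p 0 v - p 0 u * q 0 v))%:C.
  rewrite !mxE; case: (y 0 u) => a b; case: (y 0 v) => c e.
  by apply/eqP; rewrite eq_complex /=; apply/andP; split; apply/eqP; ring.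
have cross0 : \sum_u \sum_v L u v * (q 0 u * p 0 v - p 0 u * q 0 v) = 0.
  under eq_bigr => u _ do under eq_bigr => v _ do rewrite mulrBr.
  under eq_bigr => u _ do rewrite sumrB.
  rewrite sumrB exchange_big /=; apply/eqP; rewrite subr_eq0; apply/eqP.
  apply: eq_bigr => u _; apply: eq_bigr => v _.
  by rewrite L_symE; ring.
rewrite !mulmx_bilinearE; transitivity
  ((\sum_u \sum_v L u v * (p 0 u * p 0 v + q 0 u * q 0 v))%:C +
   'i * (\sum_u \sum_v L u v * (q 0 u * p 0 v - p 0 u * q 0 v))%:C).
  rewrite !rmorph_sum mulr_sumr -big_split; apply: eq_bigr => u _.
  by rewrite !rmorph_sum mulr_sumr -big_split; apply: eq_bigr => v _; exact: termE.
rewrite cross0 mulr0 addr0 -big_split; congr _%:C; apply: eq_bigr => u _.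
by rewrite -big_split; apply: eq_bigr => v _; rewrite !mxE /=; ring.
Qed.

Lemma realC_norm (y : 'rV[R[i]]_m) :
  (y *m y^t*) 0 0 = (\sum_u re y 0 u ^+ 2 + \sum_u im y 0 u ^+ 2)%:C.
Proof.
rewrite mxE -big_split rmorph_sum; apply: eq_bigr => u _ /=.
by rewrite !mxE add_Re2_Im2 normCK.
Qed.

Lemma lincomb_realC (a b : R[i]) (u1 u2 : 'rV[R]_m) :
  let y := a *: map_mx (real_complex R) u1 + b *: map_mx (real_complex R) u2 in
  re y = complex.Re a *: u1 + complex.Re b *: u2 /\
  im y = complex.Im a *: u1 + complex.Im b *: u2.
Proof.
by split; apply/rowP => j; rewrite !mxE; case: a => ? ?; case: b => ? ? /=; ring.
Qed.

Lemma realC_norm_gt0 (y : 'rV[R[i]]_m) :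
  y != 0 -> 0 < \sum_u re y 0 u ^+ 2 + \sum_u im y 0 u ^+ 2.
Proof.
move=> y_neq0; have : 0 < dotmx y y by rewrite (dnorm_gt0 (@dotmx _ _)).
by rewrite dotmxE realC_norm ltcR.
Qed.

Lemma realsym_spectral : exists (P : 'M[R[i]]_m) (d : 'I_m -> R),
  P \is unitarymx /\ LC = P^t* *m diag_mx (\row_i (d i)%:C) *m P.
Proof.
have LC_herm : LC \is hermsymmx.
  apply: realsym_hermsym.
    by apply/is_hermitianmxP; rewrite expr0 scale1r map_mx_id // map_trmx L_sym.
  by apply/mxOverP => i j; rewrite mxE; apply/complex_realP; exists (L i j).
exists (spectralmx LC), (fun i => complex.Re (spectral_diag LC 0 i)).
split; first exact: spectral_unitarymx.
have /mxOverP diag_real := hermitian_spectral_diag_real LC_herm.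
have -> : \row_i (complex.Re (spectral_diag LC 0 i))%:C = spectral_diag LC.
  by apply/rowP => i; rewrite mxE RRe_real.
rewrite -invmx_unitary ?spectral_unitarymx //.
exact/orthomx_spectralP/hermitian_normalmx.
Qed.

Section Spectrum.
Variables (P : 'M[R[i]]_m) (d : 'I_m -> R).
Hypothesis P_unitary : P \is unitarymx.
Hypothesis LC_spectral : LC = P^t* *m diag_mx (\row_i (d i)%:C) *m P.

Let PtP : P^t* *m P = 1%:M.
Proof. by have := mulmxKtV 1%:M P_unitary (erefl m); rewrite mul1mx. Qed.

Lemma char_poly_spectral : char_poly L = \prod_i ('X - (d i)%:P).
Proof.
apply: (@map_poly_inj _ _ (real_complex R)).
rewrite map_char_poly LC_spectral (char_poly_similar _ PtP) char_poly_trig ?diag_mx_is_trig //.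
rewrite rmorph_prod; apply: eq_bigr => i _.
by rewrite rmorphB /= map_polyX map_polyC !mxE eqxx mulr1n.
Qed.

Lemma spectral_realC (w : 'rV[R[i]]_m) (y := w *m P) :
  ((re y *m L *m (re y)^T) 0 0 + (im y *m L *m (im y)^T) 0 0)%:C =
    \sum_i (d i)%:C * `|w 0 i| ^+ 2 /\
  (\sum_u re y 0 u ^+ 2 + \sum_u im y 0 u ^+ 2)%:C = \sum_i `|w 0 i| ^+ 2.
Proof.
have yt : y^t* = P^t* *m w^t* by rewrite /y trmx_mul map_mxM.
rewrite -realC_qf -realC_norm yt LC_spectral !mulmxA !mulmxtVK // mul_mx_diag !mxE.
by split; apply: eq_bigr => i _; rewrite !mxE normCK // mulrCA mulrA.
Qed.

Lemma spectral_qf_le (w : 'rV[R[i]]_m) (s : R) (y := w *m P) :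
  (forall i, w 0 i = 0 \/ d i <= s) ->
  (re y *m L *m (re y)^T) 0 0 + (im y *m L *m (im y)^T) 0 0 <=
  s * (\sum_u re y 0 u ^+ 2 + \sum_u im y 0 u ^+ 2).
Proof.
move=> w_supp; have [qfE normE] := spectral_realC w.
rewrite -lecR rmorphM /= qfE normE mulr_sumr; apply: ler_sum => i _.
have [->|d_le] := w_supp i; first by rewrite normr0 expr0n /= !mulr0.
by apply: ler_wpM2r; [exact: exprn_ge0 | rewrite lecR].
Qed.

Lemma spectral_qf_ge (w : 'rV[R[i]]_m) (s : R) (y := w *m P) :
  (forall i, w 0 i = 0 \/ s <= d i) ->
  s * (\sum_u re y 0 u ^+ 2 + \sum_u im y 0 u ^+ 2) <=
  (re y *m L *m (re y)^T) 0 0 + (im y *m L *m (im y)^T) 0 0.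
Proof.
move=> w_supp; have [qfE normE] := spectral_realC w.
rewrite -lecR rmorphM /= qfE normE mulr_sumr; apply: ler_sum => i _.
have [->|d_ge] := w_supp i; first by rewrite normr0 expr0n /= !mulr0.
by apply: ler_wpM2r; [exact: exprn_ge0 | rewrite lecR].
Qed.

Variables i0 i1 : 'I_m.
Hypothesis i0_neq_i1 : i0 != i1.
Hypothesis d_i0_le : d i0 <= d i1.
Hypothesis d_i1_le : forall i, i != i0 -> d i1 <= d i.

Lemma lambda2_ge (c : R) :
  (forall z : 'rV[R]_m, \sum_u z 0 u = 0 ->
     c * \sum_u z 0 u ^+ 2 <= (z *m L *m z^T) 0 0) ->
  c <= d i1.
Proof.
move=> c_le; pose e i : 'rV[R[i]]_m := delta_mx 0 i.
have [a [b [ab_neq0 comb0]]] :=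
  exists_nontrivial_comb (\sum_u (e i0 *m P) 0 u) (\sum_u (e i1 *m P) 0 u).
pose w := a *: e i0 + b *: e i1; set y := w *m P.
have wE i : w 0 i = a * (i == i0)%:R + b * (i == i1)%:R by rewrite !mxE.
have w_i0 : w 0 i0 = a by rewrite wE eqxx (negbTE i0_neq_i1) mulr1 mulr0 addr0.
have w_i1 : w 0 i1 = b by rewrite wE eqxx eq_sym (negbTE i0_neq_i1) mulr1 mulr0 add0r.
have y_neq0 : y != 0.
  apply: contraTneq ab_neq0 => y0; have : w = 0 by rewrite -(mulmxtVK w P_unitary) -/y y0 mul0mx.
  by move=> w0; rewrite -w_i0 -w_i1 w0 !mxE eqxx.
have y_sum0 : \sum_u y 0 u = 0.
  rewrite -[RHS]comb0 !mulr_sumr -big_split; apply: eq_bigr => u _.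
  by rewrite /y mulmxDl -!scalemxAl !mxE.
have re_sum0 : \sum_u re y 0 u = 0.
  by under eq_bigr do rewrite mxE; rewrite -raddf_sum y_sum0.
have im_sum0 : \sum_u im y 0 u = 0.
  by under eq_bigr do rewrite mxE; rewrite -raddf_sum y_sum0.
have qf_le : (re y *m L *m (re y)^T) 0 0 + (im y *m L *m (im y)^T) 0 0 <=
             d i1 * (\sum_u re y 0 u ^+ 2 + \sum_u im y 0 u ^+ 2).
  apply: spectral_qf_le => i; have [->|] := eqVneq i i0; first by right.
  have [->|] := eqVneq i i1; first by right.
  by move=> /negbTE ne1 /negbTE ne0; left; rewrite wE ne0 ne1 !mulr0 addr0.
rewrite -(ler_pM2l (realC_norm_gt0 y_neq0)) mulrC mulrDr [_ * d i1]mulrC.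
exact: le_trans (lerD (c_le _ re_sum0) (c_le _ im_sum0)) qf_le.
Qed.

Lemma lambda2_le (c : R) (u1 u2 : 'rV[R]_m) :
  (forall al be : R, al *: u1 + be *: u2 = 0 -> al = 0 /\ be = 0) ->
  (forall al be : R, let z := al *: u1 + be *: u2 in
     (z *m L *m z^T) 0 0 <= c * \sum_u z 0 u ^+ 2) ->
  d i1 <= c.
Proof.
move=> u_free le_c; set U1 := map_mx (real_complex R) u1; set U2 := map_mx (real_complex R) u2.
have [a [b [ab_neq0 comb0]]] := exists_nontrivial_comb ((U1 *m P^t*) 0 i0) ((U2 *m P^t*) 0 i0).
have [reE imE] := lincomb_realC a b u1 u2; set y := a *: U1 + b *: U2 in reE imE.
have y_neq0 : y != 0.
  apply: contraTneq ab_neq0 => y0; rewrite y0 !map_mx0 in reE imE.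
  have [re_a re_b] := u_free _ _ (esym reE); have [im_a im_b] := u_free _ _ (esym imE).
  by rewrite (complexE a) (complexE b) re_a re_b im_a im_b rmorph0 mulr0 addr0 eqxx.
pose w := y *m P^t*.
have w_i0 : w 0 i0 = 0 by rewrite -comb0 /w mulmxDl -!scalemxAl !mxE.
have qf_ge : d i1 * (\sum_u re y 0 u ^+ 2 + \sum_u im y 0 u ^+ 2) <=
             (re y *m L *m (re y)^T) 0 0 + (im y *m L *m (im y)^T) 0 0.
  rewrite -[y](mulmxKtV _ P_unitary (erefl m)) -/w; apply: spectral_qf_ge => i.
  by have [->|/d_i1_le] := eqVneq i i0; [left | right].
have N_gt0 := realC_norm_gt0 y_neq0.
rewrite reE imE in qf_ge N_gt0.
have := le_trans qf_ge (lerD (le_c _ _) (le_c _ _)).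
by rewrite -mulrDr ler_pM2r.
Qed.

End Spectrum.

End RealSymmetric.

Lemma sort_two_least (R : realDomainType) (m : nat) (d : 'I_m -> R) : (1 < m)%N ->
  exists (s : seq R) (i0 i1 : 'I_m),
  [/\ sorted <=%R s, perm_eq s (map d (enum 'I_m)), i0 != i1, s`_1 = d i1 &
      d i0 <= d i1 /\ forall i, i != i0 -> d i1 <= d i].
Proof.
move=> m_gt1; pose x0 := Ordinal (ltnW m_gt1).
pose Is := sort (relpre d <=%R) (enum 'I_m).
have Is_perm : perm_eq Is (enum 'I_m) by rewrite perm_sort.
have Is_uniq : uniq Is by rewrite (perm_uniq Is_perm) enum_uniq.
have Is_size : size Is = m by rewrite (perm_size Is_perm) size_enum_ord.
have Is_mem i : i \in Is by rewrite (perm_mem Is_perm) mem_enum.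
have s_sorted : sorted <=%R (map d Is).
  by rewrite sorted_map; apply: sort_sorted => i j; exact: le_total.
have s_nth t : (t < m)%N -> (map d Is)`_t = d (nth x0 Is t).
  by move=> t_lt; rewrite (nth_map x0) // Is_size.
have s_mono t1 t2 : (t1 <= t2 < m)%N -> d (nth x0 Is t1) <= d (nth x0 Is t2).
  case/andP => t12 t2_lt; rewrite -!s_nth ?(leq_ltn_trans t12) //.
  apply: sorted_leq_nth => //; first exact: le_trans.
    by rewrite inE size_map Is_size (leq_ltn_trans t12).
  by rewrite inE size_map Is_size.
exists (map d Is), (nth x0 Is 0), (nth x0 Is 1); split => //.
- exact: perm_map.
- by rewrite nth_uniq ?Is_size // ltnW.
- exact: s_nth.
split=> [|i i_neq0]; first exact: s_mono.
have i_idx : (index i Is < m)%N by rewrite -[X in (_ < X)%N]Is_size index_mem.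
rewrite -(nth_index x0 (Is_mem i)); apply: s_mono; rewrite i_idx andbT lt0n.
by apply: contra i_neq0 => /eqP idx0; rewrite -idx0 nth_index.
Qed.

Lemma symmetric_lambda2 (R : realType) (m : nat) (L : 'M[R]_m) :
  L^T = L -> (1 < m)%N ->
  exists s : seq R, sorted_eigenvalues L s /\
  (forall c : R, (forall z : 'rV[R]_m, \sum_u z 0 u = 0 ->
       c * \sum_u z 0 u ^+ 2 <= (z *m L *m z^T) 0 0) -> c <= s`_1) /\
  (forall (c : R) (u1 u2 : 'rV[R]_m),
     (forall al be : R, al *: u1 + be *: u2 = 0 -> al = 0 /\ be = 0) ->
     (forall al be : R, let z := al *: u1 + be *: u2 in
        (z *m L *m z^T) 0 0 <= c * \sum_u z 0 u ^+ 2) ->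
     s`_1 <= c).
Proof.
move=> L_sym m_gt1; have [P [d [P_unitary LC_spectral]]] := realsym_spectral L_sym.
have [s [i0 [i1 [s_sorted s_perm i01 s1E [d_i0 d_i1]]]]] := sort_two_least d m_gt1.
exists s; rewrite s1E; split; last split.
- split=> //; rewrite (char_poly_spectral P_unitary LC_spectral) (perm_big _ s_perm).
  by rewrite big_map big_enum.
- exact: (lambda2_ge L_sym P_unitary LC_spectral i01 d_i0).
- exact: (lambda2_le L_sym P_unitary LC_spectral d_i1).
Qed.

Lemma sum_row_mx (T : Type) (V : nmodType) (p q : nat) (F : T -> V)
    (y : 'rV[T]_p) (w : 'rV[T]_q) :
  \sum_u F (row_mx y w 0 u) = \sum_a F (y 0 a) + \sum_b F (w 0 b).
Proof.
by rewrite big_split_ord; congr (_ + _); apply: eq_bigr => i _; rewrite ?row_mxEl ?row_mxEr.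
Qed.

Lemma sum_split_ord2 (V : nmodType) (p q : nat) (G : 'I_(p + q) -> 'I_(p + q) -> V) :
  \sum_u \sum_v G u v =
    (\sum_a \sum_b G (lshift q a) (lshift q b) + \sum_a \sum_b G (lshift q a) (rshift p b)) +
    (\sum_a \sum_b G (rshift p a) (lshift q b) + \sum_a \sum_b G (rshift p a) (rshift p b)).
Proof.
by rewrite big_split_ord; congr (_ + _); rewrite -big_split; apply: eq_bigr => a _;
  exact: big_split_ord.
Qed.

Section SignRow.
Variables (R : realFieldType) (n : nat).

Definition sign_row : 'rV[R]_(n + n) := row_mx (const_mx 1) (const_mx (-1)).

Lemma sign_rowE (al be : R) :
  al *: const_mx 1 + be *: sign_row =
  row_mx (const_mx (al + be)) (const_mx (al - be)).
Proof.
rewrite /sign_row -[const_mx 1]row_mx_const !scale_row_mx add_row_mx.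
by congr row_mx; apply/rowP => j; rewrite !mxE; ring.
Qed.

Lemma sign_row_free : (0 < n)%N -> forall al be : R,
  al *: const_mx 1 + be *: sign_row = 0 ->
  al = 0 /\ be = 0.
Proof.
move=> n_gt0 al be; rewrite sign_rowE => /rowP z0.
have := z0 (lshift n (Ordinal n_gt0)); have := z0 (rshift n (Ordinal n_gt0)).
by rewrite row_mxEl row_mxEr !mxE; split; lra.
Qed.

End SignRow.

Arguments sign_row {R n}.

Section DoubleClique.
Variables (R : realFieldType) (n k : nat) (f : 'I_k -> 'I_n * 'I_n).
Hypothesis f_inj : injective f.
Local Notation L := (laplacian R (Dadj f)).

Lemma Dadj_sym : symmetric (Dadj f).
Proof.
by move=> u v; rewrite /Dadj; case: (fintype.split u) => a; case: (fintype.split v) => b //;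
  rewrite eq_sym.
Qed.

Lemma Dadj_lshift2 a b : Dadj f (lshift n a) (lshift n b) = (a != b).
Proof. by rewrite /Dadj !(unsplitK (inl _)). Qed.

Lemma Dadj_rshift2 a b : Dadj f (rshift n a) (rshift n b) = (a != b).
Proof. by rewrite /Dadj !(unsplitK (inr _)). Qed.

Lemma Dadj_lrshift a b : Dadj f (lshift n a) (rshift n b) = ((a, b) \in codom f).
Proof. by rewrite /Dadj (unsplitK (inl _)) (unsplitK (inr _)). Qed.

Lemma Dadj_rlshift a b : Dadj f (rshift n a) (lshift n b) = ((b, a) \in codom f).
Proof. by rewrite /Dadj (unsplitK (inl _)) (unsplitK (inr _)). Qed.

Lemma Dadj_qf (y w : 'rV[R]_n) :
  let z := row_mx y w in
  (z *m L *m z^T) 0 0 =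
  dispersion (y 0) + dispersion (w 0) + \sum_i (y 0 (f i).1 - w 0 (f i).2) ^+ 2.
Proof.
move=> z; apply: (@pmulrnI _ 2) => //=; rewrite laplacian_qf; last exact: Dadj_sym.
have clique (t : 'rV[R]_n) :
  \sum_a \sum_b (a != b)%:R * (t 0 a - t 0 b) ^+ 2 = dispersion (t 0) *+ 2.
  rewrite -(sum_sqr_diff predT); apply: eq_big => // a _; apply: eq_big => // b _.
  by case: eqP => [->|]; rewrite ?subrr ?expr0n ?mulr0 ?mul1r.
have bridges : \sum_a \sum_b ((a, b) \in codom f)%:R * (y 0 a - w 0 b) ^+ 2 =
               \sum_i (y 0 (f i).1 - w 0 (f i).2) ^+ 2.
  rewrite pair_bigA /= -(sum_codom_inj (fun p => (y 0 p.1 - w 0 p.2) ^+ 2) f_inj).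
  by rewrite [RHS]big_mkcond; apply: eq_bigr => -[a b] _ /=; case: (_ \in _); rewrite ?mul1r ?mul0r.
have bridges_sym : \sum_a \sum_b ((b, a) \in codom f)%:R * (w 0 a - y 0 b) ^+ 2 =
                   \sum_i (y 0 (f i).1 - w 0 (f i).2) ^+ 2.
  rewrite -bridges exchange_big; apply: eq_bigr => a _; apply: eq_bigr => b _.
  by rewrite -sqrrN opprB.
rewrite sum_split_ord2 /z /=.
have -> : forall A B C : R, (A + B + C) *+ 2 = (A *+ 2 + C) + (C + B *+ 2).
  by move=> A B C; rewrite !mulr2n; ring.
rewrite -!clique -{1}bridges -bridges_sym.
congr ((_ + _) + (_ + _)); apply: eq_bigr => a _; apply: eq_bigr => b _.
- by rewrite Dadj_lshift2 !row_mxEl.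
- by rewrite Dadj_lrshift row_mxEl row_mxEr.
- by rewrite Dadj_rlshift row_mxEl row_mxEr.
- by rewrite Dadj_rshift2 !row_mxEr.
Qed.

Lemma Dadj_qf_ge (z : 'rV[R]_(n + n)) : (0 < n)%N -> (0 < k)%N -> \sum_u z 0 u = 0 ->
  2 / (3 * (2 * n%:R - 1)) * \sum_u z 0 u ^+ 2 <= (z *m L *m z^T) 0 0.
Proof.
move=> n_gt0 k_gt0; rewrite -(hsubmxK z) Dadj_qf (sum_row_mx id) (sum_row_mx (fun x => x ^+ 2)).
set y := lsubmx z; set w := rsubmx z => /= sum0.
have sum_w : \sum_b w 0 b = - \sum_a y 0 a by apply/eqP; rewrite -addr_eq0 addrC sum0.
pose i0 := Ordinal k_gt0; set a0 := (f i0).1; set b0 := (f i0).2.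
have bridge_ge : (y 0 a0 - w 0 b0) ^+ 2 <= \sum_i (y 0 (f i).1 - w 0 (f i).2) ^+ 2.
  by rewrite (bigD1 i0) //= lerDl; apply: sumr_ge0 => i _; exact: sqr_ge0.
have dev_y := sqr_deviation_le (y 0) a0.
have dev_w := sqr_deviation_le (w 0) b0.
have disp_y := dispersion_ge0 (y 0).
have disp_w := dispersion_ge0 (w 0).
rewrite /dispersion card_ord sum_w sqrrN opprK in dev_y dev_w disp_y disp_w *.
have n_ge1 : 1 <= n%:R :> R by rewrite ler1n.
have := two_clique_ineq n_ge1 disp_y disp_w dev_y dev_w.
move/le_trans; apply; rewrite lerD2l; exact: bridge_ge.
Qed.

Lemma Dadj_qf_sign_span (al be : R) :
  let z := al *: const_mx 1 + be *: sign_row in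
  (z *m L *m z^T) 0 0 = 4 * k%:R * be ^+ 2 /\
  \sum_u z 0 u ^+ 2 = 2 * n%:R * (al ^+ 2 + be ^+ 2).
Proof.
have const_disp c : dispersion ((const_mx c : 'rV[R]_n) 0) = 0.
  by apply: dispersion_const => i; rewrite mxE.
have sum_sqr_const c : \sum_(j < n) (const_mx c : 'rV[R]_n) 0 j ^+ 2 = c ^+ 2 *+ n.
  by rewrite (eq_bigr (fun=> c ^+ 2)) ?sumr_const ?card_ord // => j _; rewrite mxE.
rewrite /= sign_rowE Dadj_qf (sum_row_mx (fun x => x ^+ 2)) !const_disp !sum_sqr_const.
rewrite (eq_bigr (fun=> (2 * be) ^+ 2)) => [|i _]; last by rewrite !mxE; congr (_ ^+ 2); ring.
by rewrite sumr_const card_ord; split; ring.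
Qed.

End DoubleClique.

Theorem theorem4p2 (R : realType) (n k : nat) (f : 'I_k -> 'I_n * 'I_n) :
  (1 <= n)%N -> (1 <= k)%N -> (k <= n)%N -> injective f ->
  #|'I_(n + n)| = (2 * n)%N /\
  exists s : seq R,
    sorted_eigenvalues (laplacian R (Dadj f)) s /\
    2 / (3 * (2 * n%:R - 1)) <= s`_1 <= 2 * k%:R / n%:R.
Proof.
move=> n_gt0 k_gt0 _ f_inj; split; first by rewrite card_ord mul2n addnn.
have [s [s_eig [s1_ge s1_le]]] :=
  symmetric_lambda2 (laplacian_sym R (@Dadj_sym n k f)) (leq_add n_gt0 n_gt0).
exists s; split=> //; apply/andP; split.
  by apply: s1_ge => z; exact: Dadj_qf_ge.
apply: (s1_le _ _ _ (sign_row_free n_gt0)) => al be /=.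
have [-> ->] := Dadj_qf_sign_span f_inj al be.
have n_neq0 : n%:R != 0 :> R by rewrite pnatr_eq0 -lt0n.
have -> : 2 * k%:R / n%:R * (2 * n%:R * (al ^+ 2 + be ^+ 2)) =
          4 * k%:R * (al ^+ 2 + be ^+ 2) by field.
by rewrite ler_wpM2l ?lerDr ?sqr_ge0 ?mulr_ge0 ?ler0n.
Qed.
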